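(* Let $f:\mathbb{R}^n\to\mathbb{R}$, $g:\mathbb{R}^m\to\mathbb{R}$, $Q:\mathbb{R}^n\times\mathbb{R}^m\to\mathbb{R}\cup\{+\infty\}$ and $L(x,y)=f(x)+Q(x,y)+g(y)$ satisfy: (A1) $L$ is bounded below; $f,g$ are continuously differentiable with $\nabla f$, $\nabla g$ Lipschitz continuous with constants $L_{\nabla f}$, $L_{\nabla g}$; $Q$ is proper and lower semicontinuous; $\phi_1:\mathbb{R}^n\to\mathbb{R}$, $\phi_2:\mathbb{R}^m\to\mathbb{R}$ are differentiable, $\phi_i$ is $\theta_i$-strongly convex with $\theta_1>L_{\nabla f}$, $\theta_2>L_{\nabla g}$, and $\nabla\phi_i$ is $\eta_i$-Lipschitz continuous ($i=1,2$); (A2) $L$ is coercive and $\mathrm{dom}\,Q$ is closed; for all $(x,y)\in\mathrm{dom}\,Q$, $\partial_xQ(x,y)\times\partial_yQ(x,y)\subset\partial Q(x,y)$; and $Q(x,y)=q(x,y)+h(x)$, where $h:\mathbb{R}^n\to\mathbb{R}\cup\{+\infty\}$ is continuous on its domain, $q:\mathbb{R}^n\times\mathbb{R}^m\to\mathbb{R}\cup\{+\infty\}$ is continuous on $\mathrm{dom}\,Q$, for every $y$ the partial function $q(\cdot,y)$ is continuously differentiable, and for each bounded subset $D_1\times D_2\subset\mathrm{dom}\,Q$ there exists $\xi>0$ such that $\|\nabla_xq(\bar x,y)-\nabla_xq(\bar x,\bar y)\|\le\xi\|y-\bar y\|$ for all $\bar x\in D_1$, $y,\bar y\in D_2$. Let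 $\{(x_k,y_k)\}$ and $\{(\hat x_k,\hat y_k)\}$ be sequences generated by the following algorithm: choose $(x_0,y_0)\in\mathbb{R}^n\times\mathbb{R}^m$, set $(\hat x_0,\hat y_0)=(x_0,y_0)$, choose $\alpha_{\max},\beta_{\max}\ge0$ with $\alpha_{\max}+\beta_{\max}<1$ and $\alpha_k\in[0,\alpha_{\max}]$, $\beta_k\in[0,\beta_{\max}]$; for $k=0,1,\dots$: 1. $x_{k+1}\in\arg\min_{x}\{Q(x,\hat y_k)+\langle\nabla f(\hat x_k),x\rangle+D_{\phi_1}(x,\hat x_k)\}$, $y_{k+1}\in\arg\min_{y}\{Q(x_{k+1},y)+\langle\nabla g(\hat y_k),y\rangle+D_{\phi_2}(y,\hat y_k)\}$; 2. $u_{k+1}=x_{k+1}+\alpha_k(x_{k+1}-x_k)+\beta_k(x_k-x_{k-1})$, $v_{k+1}=y_{k+1}+\alpha_k(y_{k+1}-y_k)+\beta_k(y_k-y_{k-1})$; 3. if $L(u_{k+1},v_{k+1})\le L(x_{k+1},y_{k+1})$ then $(\hat x_{k+1},\hat y_{k+1})=(u_{k+1},v_{k+1})$, else $(\hat x_{k+1},\hat y_{k+1})=(x_{k+1},y_{k+1})$. For any integer $k\ge1$ set $q_x^{k+1}=\nabla f(x_{k+1})-\nabla f(\hat x_k)-\nabla\phi_1(x_{k+1})+\nabla\phi_1(\hat x_k)$, $p_x^{k+1}=\nabla_xq(x_{k+1},y_{k+1})-\nabla_xq(x_{k+1},\hat y_k)+q_x^{k+1}$, $p_y^{k+1}=\nabla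 g(y_{k+1})-\nabla g(\hat y_k)-\nabla\phi_2(y_{k+1})+\nabla\phi_2(\hat y_k)$. Then $(p_x^{k+1},p_y^{k+1})\in\partial L(x_{k+1},y_{k+1})$, and there exists $\varrho>0$ such that $\|(p_x^{k+1},p_y^{k+1})\|\le\varrho\|(x_{k+1}-\hat x_k,y_{k+1}-\hat y_k)\|$.
   Context: For a convex differentiable $\phi$, $D_\phi(x,y)=\phi(x)-\phi(y)-\langle\nabla\phi(y),x-y\rangle$ (Bregman distance). $\phi$ is $\theta$-strongly convex if $\phi-\frac\theta2\|\cdot\|^2$ is convex. For a proper lsc $F$, the Fréchet subdifferential $\hat\partial F(x)$ is the set of $v$ with $\liminf_{y\to x}\frac{F(y)-F(x)-\langle v,y-x\rangle}{\|y-x\|}\ge0$ (empty if $x\notin\mathrm{dom}F$), and the (limiting) subdifferential is $\partial F(x)=\{v:\exists x_k\to x, F(x_k)\to F(x), v_k\in\hat\partial F(x_k), v_k\to v\}$. $\partial_xQ(x,y)$ and $\partial_yQ(x,y)$ denote the limiting subdifferentials of $Q(\cdot,y)$ at $x$ and of $Q(x,\cdot)$ at $y$. $(x_{-1},y_{-1})$ in step 2 is a given initial point (e.g. $(x_0,y_0)$). *)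

From HB Require Import structures.
From mathcomp Require Import all_boot all_order all_algebra.
From mathcomp Require Import reals constructive_ereal.
Set Implicit Arguments. Unset Strict Implicit. Unset Printing Implicit Defensive.
Import Order.TTheory GRing.Theory Num.Theory.
Local Open Scope ring_scope.

Definition dotv {R : realType} {n : nat} (u v : 'rV[R]_n) : R :=
  \sum_(i < n) u 0 i * v 0 i.
Definition normv {R : realType} {n : nat} (u : 'rV[R]_n) : R :=
  Num.sqrt (dotv u u).

Definition subp {R : realType} {n m : nat} (z w : 'rV[R]_n * 'rV[R]_m)
  : 'rV[R]_n * 'rV[R]_m := (z.1 - w.1, z.2 - w.2).
Definition dotp {R : realType} {n m : nat} (z w : 'rV[R]_n * 'rV[R]_m) : R :=
  dotv z.1 w.1 + dotv z.2 w.2.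
Definition normp {R : realType} {n m : nat} (z : 'rV[R]_n * 'rV[R]_m) : R :=
  Num.sqrt (dotp z z).

Definition frechet_subdiff {R : realType} {V : Type} (sub : V -> V -> V)
  (nrm : V -> R) (dt : V -> V -> R) (F : V -> \bar R) (x v : V) : Prop :=
  F x \is a fin_num /\
  forall eps : R, 0 < eps -> exists delta : R, 0 < delta /\
    forall y : V, nrm (sub y x) < delta ->
      (F x + (dt v (sub y x) - eps * nrm (sub y x))%:E <= F y)%E.

Definition seq_cvg {R : realType} {V : Type} (sub : V -> V -> V)
  (nrm : V -> R) (xs : nat -> V) (x : V) : Prop :=
  forall eps : R, 0 < eps -> exists N : nat, forall k : nat, (N <= k)%N ->
    nrm (sub (xs k) x) < eps.

Definition limiting_subdiff {R : realType} {V : Type} (sub : V -> V -> V)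
  (nrm : V -> R) (dt : V -> V -> R) (F : V -> \bar R) (x v : V) : Prop :=
  exists (xs vs : nat -> V),
    (forall k, frechet_subdiff sub nrm dt F (xs k) (vs k)) /\
    seq_cvg sub nrm xs x /\ seq_cvg sub nrm vs v /\
    F x \is a fin_num /\
    (forall eps : R, 0 < eps -> exists N : nat, forall k : nat, (N <= k)%N ->
        `|fine (F (xs k)) - fine (F x)| < eps).

Definition subdiffv {R : realType} {n : nat} (F : 'rV[R]_n -> \bar R) :=
  limiting_subdiff (fun a b : 'rV[R]_n => a - b) normv dotv F.
Definition subdiffp {R : realType} {n m : nat}
  (F : 'rV[R]_n * 'rV[R]_m -> \bar R) :=
  limiting_subdiff subp normp dotp F.

Definition is_gradient {R : realType} {n : nat} (F : 'rV[R]_n -> R)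
  (G : 'rV[R]_n -> 'rV[R]_n) : Prop :=
  forall (x : 'rV[R]_n) (eps : R), 0 < eps -> exists delta : R, 0 < delta /\
    forall h : 'rV[R]_n, normv h < delta ->
      `|F (x + h) - F x - dotv (G x) h| <= eps * normv h.

Definition continuous_v {R : realType} {n : nat} (G : 'rV[R]_n -> 'rV[R]_n) : Prop :=
  forall (x : 'rV[R]_n) (eps : R), 0 < eps -> exists delta : R, 0 < delta /\
    forall y, normv (y - x) < delta -> normv (G y - G x) < eps.

Definition lipschitz_v {R : realType} {n : nat} (G : 'rV[R]_n -> 'rV[R]_n) (c : R) : Prop :=
  forall x y, normv (G x - G y) <= c * normv (x - y).

Definition convex_fun {R : realType} {n : nat} (F : 'rV[R]_n -> R) : Prop :=
  forall (x y : 'rV[R]_n) (t : R), 0 <= t -> t <= 1 ->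
    F (t *: x + (1 - t) *: y) <= t * F x + (1 - t) * F y.

Definition strongly_convex {R : realType} {n : nat} (phi : 'rV[R]_n -> R) (theta : R) : Prop :=
  convex_fun (fun z => phi z - theta / 2 * normv z ^+ 2).

Definition bregman {R : realType} {n : nat} (phi : 'rV[R]_n -> R)
  (gphi : 'rV[R]_n -> 'rV[R]_n) (x y : 'rV[R]_n) : R :=
  phi x - phi y - dotv (gphi y) (x - y).

Definition boundedv {R : realType} {n : nat} (D : 'rV[R]_n -> Prop) : Prop :=
  exists M : R, forall x, D x -> normv x <= M.

Definition in_domQ {R : realType} {n m : nat} (Q : 'rV[R]_n -> 'rV[R]_m -> \bar R)
  (z : 'rV[R]_n * 'rV[R]_m) : Prop := Q z.1 z.2 \is a fin_num.

Definition properQ {R : realType} {n m : nat} (Q : 'rV[R]_n -> 'rV[R]_m -> \bar R) : Prop :=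
  (forall x y, Q x y != -oo%E) /\ exists x y, Q x y \is a fin_num.

Definition lscQ {R : realType} {n m : nat} (Q : 'rV[R]_n -> 'rV[R]_m -> \bar R) : Prop :=
  forall (z : 'rV[R]_n * 'rV[R]_m) (a : R), (a%:E < Q z.1 z.2)%E ->
    exists delta : R, 0 < delta /\
      forall w, normp (subp w z) < delta -> (a%:E < Q w.1 w.2)%E.

Definition closedp {R : realType} {n m : nat} (A : 'rV[R]_n * 'rV[R]_m -> Prop) : Prop :=
  forall z, (forall eps : R, 0 < eps -> exists w, A w /\ normp (subp w z) < eps) -> A z.

Definition Lfun {R : realType} {n m : nat} (f : 'rV[R]_n -> R) (g : 'rV[R]_m -> R)
  (Q : 'rV[R]_n -> 'rV[R]_m -> \bar R) (x : 'rV[R]_n) (y : 'rV[R]_m) : \bar R :=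
  ((f x + g y)%:E + Q x y)%E.

Definition is_argmin {R : realType} {V : Type} (F : V -> \bar R) (x : V) : Prop :=
  F x \is a fin_num /\ forall x', (F x <= F x')%E.

(* x_{k-1}, with x_{-1} := xm1 *)
Definition prevs {R : realType} {n : nat} (xm1 : 'rV[R]_n) (x : nat -> 'rV[R]_n) (k : nat)
  : 'rV[R]_n := if k is k'.+1 then x k' else xm1.

Definition extrap {R : realType} {n : nat} (a b : R) (xk1 xk xkm1 : 'rV[R]_n) : 'rV[R]_n :=
  xk1 + a *: (xk1 - xk) + b *: (xk - xkm1).

From HB Require Import structures.
From mathcomp Require Import all_boot all_order all_algebra.
From mathcomp Require Import reals constructive_ereal classical_sets.
From mathcomp Require Import ring lra.
Import Order.TTheory GRing.Theory Num.Theory.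
Local Open Scope ring_scope.

(* The first-order optimality conditions of the two block subproblems say that
   [-(grad f(xh_k) + grad phi1(x_{k+1}) - grad phi1(xh_k))] is a Frechet subgradient
   of [Q(., yh_k)] at [x_{k+1}], and similarly for the [y]-block.  Since
   [Q(x, y_{k+1}) - Q(x, yh_k) = q(x, y_{k+1}) - q(x, yh_k)] is smooth in [x], shifting
   by its gradient gives a subgradient of [Q(., y_{k+1})]; the hypothesis on partial
   subdifferentials makes the pair a limiting subgradient of [Q], and adding the
   gradient of the smooth part [f + g] yields [(p_x, p_y)] in [dL(x_{k+1}, y_{k+1})].

   For the bound, the descent lemma and the strong convexity of [phi_i] (with
   [L_grad f < theta_1], [L_grad g < theta_2]) show that each block step decreases [L],
   and the extrapolation test never increases it, so all iterates from index 1 on lie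
   in a sublevel set of [L], which is bounded by coercivity.  On that bounded set the
   local constant [xi] of [grad_x q] and the Lipschitz constants of [grad f],
   [grad g], [grad phi_i] bound [p_x] and [p_y] linearly. *)

Section Euclidean.
Context {R : realType} {n : nat}.
Implicit Types u v w : 'rV[R]_n.

Lemma dotvC u v : dotv u v = dotv v u.
Proof. by apply: eq_bigr => i _; rewrite mulrC. Qed.

Lemma dotvDl u v w : dotv (u + v) w = dotv u w + dotv v w.
Proof. by rewrite /dotv -big_split; apply: eq_bigr => i _; rewrite mxE mulrDl. Qed.

Lemma dotvZl (c : R) u v : dotv (c *: u) v = c * dotv u v.
Proof. by rewrite /dotv mulr_sumr; apply: eq_bigr => i _; rewrite mxE mulrA. Qed.

Lemma dotvDr u v w : dotv w (u + v) = dotv w u + dotv w v.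
Proof. by rewrite dotvC dotvDl !(dotvC w). Qed.

Lemma dotvZr (c : R) u v : dotv v (c *: u) = c * dotv v u.
Proof. by rewrite dotvC dotvZl dotvC. Qed.

Lemma dotvNl u v : dotv (- u) v = - dotv u v.
Proof. by rewrite -scaleN1r dotvZl mulN1r. Qed.

Lemma dotvBl u v w : dotv (u - v) w = dotv u w - dotv v w.
Proof. by rewrite dotvDl dotvNl. Qed.

Lemma dotvBr u v w : dotv w (u - v) = dotv w u - dotv w v.
Proof. by rewrite !(dotvC w) dotvBl. Qed.

Lemma dotv0l v : dotv 0 v = 0.
Proof. by rewrite -(scale0r 0) dotvZl mul0r. Qed.

Lemma dotv0r v : dotv v 0 = 0.
Proof. by rewrite dotvC dotv0l. Qed.

Lemma dotvv_ge0 u : 0 <= dotv u u.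
Proof. by apply: sumr_ge0 => i _; rewrite -expr2 sqr_ge0. Qed.

Lemma normv_ge0 u : 0 <= normv u.
Proof. exact: sqrtr_ge0. Qed.

Lemma normv_sqr u : normv u ^+ 2 = dotv u u.
Proof. by rewrite sqr_sqrtr // dotvv_ge0. Qed.

Lemma normv0 : normv (0 : 'rV[R]_n) = 0.
Proof. by rewrite /normv dotv0l sqrtr0. Qed.

Lemma normv_subvv u : normv (u - u) = 0.
Proof. by rewrite subrr normv0. Qed.

Lemma normvZ (c : R) u : normv (c *: u) = `|c| * normv u.
Proof. by rewrite /normv dotvZl dotvZr mulrA -expr2 sqrtrM ?sqr_ge0 // sqrtr_sqr. Qed.

Lemma normvN u : normv (- u) = normv u.
Proof. by rewrite -scaleN1r normvZ normrN normr1 mul1r. Qed.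

(* [quad] at [(C, A)] and [(B, C)] gives [A (A B - C^2) >= 0] and
   [B (A B - C^2) >= 0]; when [A = B = 0], [(1, 1)] and [(1, -1)] give [C = 0]. *)
Lemma cauchy_schwarz u v : `|dotv u v| <= normv u * normv v.
Proof.
rewrite -[X in X <= _]sqrtr_sqr -sqrtrM ?dotvv_ge0 // ler_sqrt ?mulr_ge0 ?dotvv_ge0 //.
set A := dotv u u; set B := dotv v v; set C := dotv u v.
have quad (s t : R) : 0 <= s ^+ 2 * A - 2 * s * t * C + t ^+ 2 * B.
  have := dotvv_ge0 (s *: u - t *: v).
  by rewrite !dotvBl !dotvBr !dotvZl !dotvZr (dotvC v u) -/A -/B -/C; lra.
have A0 : 0 <= A := dotvv_ge0 u.
have B0 : 0 <= B := dotvv_ge0 v.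
have hA : 0 <= A * (A * B - C ^+ 2) by have := quad C A; nra.
have hB : 0 <= B * (A * B - C ^+ 2) by have := quad B C; nra.
rewrite -subr_ge0; have [//|neg] := lerP 0 (A * B - C ^+ 2).
have A00 : A = 0 by nra.
have B00 : B = 0 by nra.
by have := quad 1 1; have := quad 1 (-1); rewrite A00 B00; nra.
Qed.

Lemma ler_dotv u v : dotv u v <= normv u * normv v.
Proof. exact: le_trans (ler_norm _) (cauchy_schwarz u v). Qed.

Lemma ler_normvD u v : normv (u + v) <= normv u + normv v.
Proof.
rewrite -[leRHS]ger0_norm ?addr_ge0 ?normv_ge0 // -sqrtr_sqr /normv.
rewrite ler_sqrt ?sqr_ge0 // -!/(normv _) sqrrD !normv_sqr.
rewrite dotvDl !dotvDr (dotvC v u) -/(normv u) -/(normv v).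
have := ler_dotv u v; lra.
Qed.

Lemma ler_normvB u v : normv (u - v) <= normv u + normv v.
Proof. by rewrite -(normvN v) ler_normvD. Qed.

End Euclidean.

Section Subdifferential.
Context {R : realType} {V : Type}.

Definition frechet_gradient (sub : V -> V -> V) (nrm : V -> R) (dt : V -> V -> R)
    (r : V -> R) (x G : V) : Prop :=
  forall eps, 0 < eps -> exists delta, 0 < delta /\ forall y,
    nrm (sub y x) < delta -> `|r y - r x - dt G (sub y x)| <= eps * nrm (sub y x).

Context {add sub : V -> V -> V} {nrm : V -> R} {dt : V -> V -> R}.
Hypothesis dtDl : forall a b d, dt (add a b) d = dt a d + dt b d.

Lemma frechet_subdiffD {F1 F2 : V -> \bar R} {r : V -> R} {x v G : V} :
  (forall y, F2 y = (F1 y + (r y)%:E)%E) -> frechet_gradient sub nrm dt r x G ->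
  frechet_subdiff sub nrm dt F1 x v -> frechet_subdiff sub nrm dt F2 x (add v G).
Proof.
move=> F2E dr [F1x dF1]; split; first by rewrite F2E fin_numD F1x.
move=> eps eps_gt0; have eps2_gt0 : 0 < eps / 2 by rewrite divr_gt0.
have [d1 [d1_gt0 Hd1]] := dF1 _ eps2_gt0.
have [d2 [d2_gt0 Hd2]] := dr _ eps2_gt0.
exists (Num.min d1 d2); split => [|y]; first by rewrite lt_min d1_gt0 d2_gt0.
rewrite lt_min => /andP[/Hd1 dF1y /Hd2]; move: dF1y.
rewrite !F2E dtDl -(fineK F1x).
case: (F1 y) => [b| |] //=; last by rewrite addye ?leey.
by rewrite -!EFinD !lee_fin ler_norml => + /andP[+ _]; lra.
Qed.

Hypothesis nrm_subvv : forall a, nrm (sub a a) = 0.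

Lemma frechet_subdiff_limiting {F : V -> \bar R} {x v : V} :
  frechet_subdiff sub nrm dt F x v -> limiting_subdiff sub nrm dt F x v.
Proof.
move=> dF; exists (fun=> x), (fun=> v).
have const_cvg (u : V) : seq_cvg sub nrm (fun=> u) u.
  by move=> eps eps_gt0; exists 0%N => k _; rewrite nrm_subvv.
split=> //; split=> //; split=> //; split; first by case: dF.
by move=> eps eps_gt0; exists 0%N => k _; rewrite subrr normr0.
Qed.

Hypothesis cvg_add : forall (us vs : nat -> V) u v,
  seq_cvg sub nrm us u -> seq_cvg sub nrm vs v ->
  seq_cvg sub nrm (fun k => add (us k) (vs k)) (add u v).

Lemma limiting_subdiffD {F1 F2 : V -> \bar R} {r : V -> R} {G : V -> V} {x v : V} :
  (forall y, F2 y = (F1 y + (r y)%:E)%E) ->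
  (forall z, frechet_gradient sub nrm dt r z (G z)) ->
  (forall eps, 0 < eps -> exists delta, 0 < delta /\ forall y,
    nrm (sub y x) < delta -> `|r y - r x| < eps) ->
  (forall eps, 0 < eps -> exists delta, 0 < delta /\ forall y,
    nrm (sub y x) < delta -> nrm (sub (G y) (G x)) < eps) ->
  limiting_subdiff sub nrm dt F1 x v -> limiting_subdiff sub nrm dt F2 x (add v (G x)).
Proof.
move=> F2E dr r_cont G_cont [xs [vs [dF1 [xs_cvg [vs_cvg [F1x F1xs]]]]]].
exists xs, (fun k => add (vs k) (G (xs k))); split.
  by move=> k; apply: frechet_subdiffD F2E (dr (xs k)) (dF1 k).
split=> //; split; last split.
- apply: cvg_add => // eps eps_gt0.
  have [d [d_gt0 Hd]] := G_cont _ eps_gt0.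
  have [N HN] := xs_cvg _ d_gt0.
  by exists N => k /HN /Hd.
- by rewrite F2E fin_numD F1x.
move=> eps eps_gt0; have eps2_gt0 : 0 < eps / 2 by rewrite divr_gt0.
have [N1 HN1] := F1xs _ eps2_gt0.
have [d [d_gt0 Hd]] := r_cont _ eps2_gt0.
have [N2 HN2] := xs_cvg _ d_gt0.
exists (maxn N1 N2) => k; rewrite geq_max => /andP[/HN1 k1 /HN2/Hd k2].
have F1xsk := (dF1 k).1.
rewrite !F2E -(fineK F1x) -(fineK F1xsk) -!EFinD /=.
rewrite (_ : _ - _ = fine (F1 (xs k)) - fine (F1 x) + (r (xs k) - r x)); last by ring.
by apply: le_lt_trans (ler_normD _ _) _; lra.
Qed.

End Subdifferential.

Lemma frechet_subdiffv_argmin {R : realType} {n : nat} {F : 'rV[R]_n -> \bar R} {x} :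
  is_argmin F x -> frechet_subdiff (fun u v => u - v) normv dotv F x 0.
Proof.
move=> [Fx Fmin]; split=> // eps eps_gt0; exists 1; split=> // y _.
apply: le_trans (Fmin y); rewrite dotv0l sub0r -(fineK Fx) -EFinD lee_fin.
by rewrite gerDl oppr_le0 mulr_ge0 ?normv_ge0 ?ltW.
Qed.

Section RealLine.
Context {R : realType}.

Definition is_deriv01 (psi dpsi : R -> R) : Prop :=
  forall t, 0 <= t <= 1 -> forall eps, 0 < eps -> exists delta, 0 < delta /\
    forall s, 0 <= s <= 1 -> `|s - t| < delta ->
      `|psi s - psi t - dpsi t * (s - t)| <= eps * `|s - t|.

(* For every [eps > 0], the supremum [T] of the [t] with
   [psi t <= psi 0 + eps * t] belongs to that set and cannot be [< 1]. *)
Lemma deriv_le0_endpoints {psi dpsi : R -> R} :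
  is_deriv01 psi dpsi -> (forall t, 0 <= t <= 1 -> dpsi t <= 0) -> psi 1 <= psi 0.
Proof.
move=> dpsiP dpsi_le0; apply/ler_addgt0Pr => eps eps_gt0.
pose E t := 0 <= t <= 1 /\ psi t <= psi 0 + eps * t.
have E0 : E 0 by rewrite /E lexx ler01 mulr0 addr0.
have supE : has_sup E by split; [exists 0 | exists 1 => t [/andP[]]].
set T := sup E.
have T01 : 0 <= T <= 1.
  by rewrite sup_upper_bound //= ge_sup //; [exists 0 | move=> t [/andP[]]].
have [d [d_gt0 Hd]] := dpsiP T T01 eps eps_gt0.
have [s Es] := sup_adherent d_gt0 supE; rewrite -/T => lt_s.
have le_sT : s <= T by apply: sup_upper_bound.
have ET : psi T <= psi 0 + eps * T.
  case: Es => s01 Es.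
  have dist_s : `|s - T| = T - s by rewrite distrC ger0_norm // subr_ge0.
  have near_s : `|s - T| < d by rewrite dist_s; lra.
  move: (Hd s s01 near_s); rewrite dist_s ler_norml => /andP[lo _].
  have : 0 <= dpsi T * (s - T) by rewrite mulr_le0 ?dpsi_le0 ?subr_le0.
  lra.
have [T1|neqT1] := eqVneq T 1; first by rewrite T1 mulr1 in ET.
have ltT1 : T < 1 by rewrite lt_neqAle neqT1; case/andP: T01.
pose s' := Num.min (T + d / 2) 1.
have [s'_gt s'_le1 s'_le] : [/\ T < s', s' <= 1 & s' <= T + d / 2].
  by rewrite lt_min ltT1 andbT !ge_min lexx orbT; split => //; lra.
have s'01 : 0 <= s' <= 1 by case/andP: T01 => T0 _; apply/andP; split; lra.
have dist_s' : `|s' - T| = s' - T by rewrite ger0_norm // subr_ge0 ltW.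
have near_s' : `|s' - T| < d by rewrite dist_s'; lra.
move: (Hd s' s'01 near_s'); rewrite dist_s' ler_norml => /andP[_ hi].
have neg_step : dpsi T * (s' - T) <= 0.
  by rewrite mulr_le0_ge0 ?dpsi_le0 // subr_ge0 ltW.
have /(sup_upper_bound supE) : E s' by split=> //; lra.
by rewrite -/T; lra.
Qed.

Lemma is_deriv01_sub_quadratic {psi dpsi : R -> R} (c : R) {b : R} : 0 <= b ->
  is_deriv01 psi dpsi ->
  is_deriv01 (fun t => psi t - c * t - b * t ^+ 2) (fun t => dpsi t - c - 2 * b * t).
Proof.
move=> b_ge0 dpsiP t t01 eps eps_gt0.
have eps2_gt0 : 0 < eps / 2 by rewrite divr_gt0.
have [d [d_gt0 Hd]] := dpsiP t t01 _ eps2_gt0.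
exists (Num.min d (eps / 2 / (b + 1))); split=> [|s s01].
  by rewrite lt_min d_gt0 !divr_gt0 //; lra.
rewrite lt_min => /andP[/(Hd s s01) dpsi_s]; rewrite ltr_pdivlMr; last lra.
have -> : psi s - c * s - b * s ^+ 2 - (psi t - c * t - b * t ^+ 2)
    - (dpsi t - c - 2 * b * t) * (s - t)
    = (psi s - psi t - dpsi t * (s - t)) - b * `|s - t| ^+ 2.
  by rewrite real_normK ?num_real //; ring.
move=> small; apply: le_trans (ler_normB _ _) _; rewrite normrM normrX normr_id.
have := normr_ge0 (s - t); rewrite ger0_norm //; nra.
Qed.

End RealLine.

Section SmoothFunctions.
Context {R : realType} {n : nat}.
Implicit Types (F : 'rV[R]_n -> R) (G : 'rV[R]_n -> 'rV[R]_n) (a c d x : 'rV[R]_n).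

Lemma is_gradient_frechet {F G} x : is_gradient F G ->
  frechet_gradient (fun u v => u - v) normv dotv F x (G x).
Proof.
move=> dF eps /(dF x)[delta [delta_gt0 Hdelta]]; exists delta; split=> // y /Hdelta.
by rewrite [x + _]addrC subrK.
Qed.

Lemma is_gradient_continuous {F G} x : is_gradient F G ->
  forall eps, 0 < eps -> exists delta, 0 < delta /\
    forall y, normv (y - x) < delta -> `|F y - F x| < eps.
Proof.
move=> dF eps eps_gt0; have [d [d_gt0 Hd]] := is_gradient_frechet x dF _ ltr01.
have Gx_ge0 := normv_ge0 (G x).
exists (Num.min d (eps / (normv (G x) + 1))); split.
  by rewrite lt_min d_gt0 divr_gt0 //; lra.
move=> y; rewrite lt_min ltr_pdivlMr; last lra.
move=> /andP[/Hd + near_y]; rewrite mul1r => lin.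
have -> : F y - F x = F y - F x - dotv (G x) (y - x) + dotv (G x) (y - x).
  by rewrite subrK.
apply: le_lt_trans (ler_normD _ _) _.
have := cauchy_schwarz (G x) (y - x); have := normv_ge0 (y - x); nra.
Qed.

Lemma is_deriv01_line {F G} a d : is_gradient F G ->
  is_deriv01 (fun t => F (a + t *: d)) (fun t => dotv (G (a + t *: d)) d).
Proof.
move=> dF t _ eps eps_gt0; have d_ge0 := normv_ge0 d.
have d1_gt0 : 0 < normv d + 1 by lra.
have [del [del_gt0 Hdel]] := dF (a + t *: d) _ (divr_gt0 eps_gt0 d1_gt0).
exists (del / (normv d + 1)); split=> [|s _]; first by rewrite divr_gt0.
rewrite ltr_pdivlMr // => near_s; have st_ge0 := normr_ge0 (s - t).
have small : normv ((s - t) *: d) < del by rewrite normvZ; nra.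
have step : a + t *: d + (s - t) *: d = a + s *: d.
  by rewrite -addrA -scalerDl [t + _]addrC subrK.
move: (Hdel _ small); rewrite step normvZ dotvZr [_ * (s - t)]mulrC => /le_trans; apply.
have frac : normv d / (normv d + 1) <= 1 by rewrite ler_pdivrMr; lra.
rewrite (_ : eps / _ * _ = eps * `|s - t| * (normv d / (normv d + 1))); last by ring.
by apply: ler_piMr; rewrite ?mulr_ge0 //; lra.
Qed.

Lemma descent_lemma {F G K} : is_gradient F G -> lipschitz_v G K ->
  forall a d, F (a + d) - F a - dotv (G a) d <= K / 2 * dotv d d.
Proof.
have descent K' : 0 <= K' -> is_gradient F G -> lipschitz_v G K' ->
    forall a d, F (a + d) - F a - dotv (G a) d <= K' / 2 * dotv d d.
  move=> K'_ge0 dF GL a d; pose c := dotv (G a) d; pose b := K' / 2 * dotv d d.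
  have b_ge0 : 0 <= b by rewrite mulr_ge0 ?divr_ge0 ?dotvv_ge0.
  have := deriv_le0_endpoints (is_deriv01_sub_quadratic c b_ge0 (is_deriv01_line a d dF)).
  rewrite scale1r scale0r addr0 expr1n expr0n /= !(mulr1, mulr0, subr0).
  move=> endpoints; suff : F (a + d) - c - b <= F a by rewrite /c /b; lra.
  apply: endpoints => t /andP[t_ge0 _]; rewrite /c /b -normv_sqr -dotvBl subr_le0.
  apply: le_trans (ler_dotv _ _) _.
  have := GL (a + t *: d) a; rewrite addrAC subrr add0r normvZ ger0_norm //.
  by have := normv_ge0 d; have := normv_ge0 (G (a + t *: d) - G a); nra.
move=> dF GL a d; have [K_ge0|K_lt0] := lerP 0 K; first exact: descent.
have d0 : dotv d d = 0.
  apply/eqP; rewrite -normv_sqr sqrf_eq0 eq_le normv_ge0 andbT.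
  have := GL (a + d) a; rewrite addrAC subrr add0r.
  by have := normv_ge0 (G (a + d) - G a); have := normv_ge0 d; nra.
have GL0 : lipschitz_v G 0.
  move=> u v; rewrite mul0r; apply: le_trans (GL u v) _.
  by have := normv_ge0 (u - v); nra.
by have := descent 0 (lexx 0) dF GL0 a d; rewrite d0 !mulr0.
Qed.

Lemma strongly_convex_segment {phi th} a d t : strongly_convex phi th -> 0 <= t <= 1 ->
  phi (a + t *: d) - phi a <= t * (phi (a + d) - phi a) - th / 2 * t * (1 - t) * dotv d d.
Proof.
move=> sc /andP[t_ge0 t_le1]; have := sc (a + d) a t t_ge0 t_le1.
have -> : t *: (a + d) + (1 - t) *: a = a + t *: d.
  by rewrite scalerDr scalerBl scale1r addrCA addrAC subrr add0r addrC.
rewrite !normv_sqr !dotvDl !dotvDr !dotvZl !dotvZr (dotvC d a); nra.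
Qed.

Lemma strongly_convex_bregman {phi gphi th} : is_gradient phi gphi -> strongly_convex phi th ->
  forall a x, th / 2 * dotv (x - a) (x - a) <= bregman phi gphi x a.
Proof.
move=> dphi sc a x; rewrite /bregman; set d := x - a.
have -> : x = a + d by rewrite /d addrC subrK.
clearbody d; set D := dotv d d; set c := dotv (gphi a) d.
apply/ler_addgt0Pr => eta eta_gt0; have D_ge0 : 0 <= D := dotvv_ge0 d.
have eta2_gt0 : 0 < eta / 2 by rewrite divr_gt0.
have zero01 : 0 <= (0 : R) <= 1 by rewrite lexx ler01.
have [del [del_gt0 Hdel]] := is_deriv01_line a d dphi 0 zero01 _ eta2_gt0.
have thD_ge0 : 0 <= `|th| * D by rewrite mulr_ge0.
pose s := Num.min 1 (Num.min (del / 2) (eta / 4 / (`|th| * D + 1))).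
have s_gt0 : 0 < s by rewrite !lt_min ltr01 !divr_gt0 //; lra.
have s_le1 : s <= 1 by rewrite ge_min lexx.
have s_del : s <= del / 2 by rewrite !ge_min lexx orbT.
have s_eta : s * (`|th| * D + 1) <= eta / 4.
  by rewrite -ler_pdivlMr; [rewrite !ge_min lexx !orbT | lra].
have s01 : 0 <= s <= 1 by rewrite ltW.
have dist_s : `|s - 0| = s by rewrite subr0 gtr0_norm.
have near_s : `|s - 0| < del by rewrite dist_s; lra.
move: (Hdel s s01 near_s); rewrite dist_s subr0 scale0r addr0 ler_norml => /andP[lo _].
have := strongly_convex_segment a d s sc s01.
have th_sD := ler_wpM2r (mulr_ge0 (ltW s_gt0) D_ge0) (ler_norm th).
rewrite -/D => seg.
suff : s * (th / 2 * D - (phi (a + d) - phi a - c + eta)) <= 0.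
  by rewrite pmulr_rle0 // subr_le0.
have : s * (th * (s * D)) <= s * (eta / 4) by rewrite ler_pM2l //; lra.
by move: lo; rewrite -/c; nra.
Qed.

Lemma bregmanvv phi gphi a : bregman phi gphi a a = 0.
Proof. by rewrite /bregman !subrr dotv0r subrr. Qed.

Lemma linearization_le_bregman {F G K phi gphi th} :
  is_gradient F G -> lipschitz_v G K -> is_gradient phi gphi -> strongly_convex phi th ->
  K <= th -> forall a x, F x - F a - dotv (G a) (x - a) <= bregman phi gphi x a.
Proof.
move=> dF GL dphi sc le_K_th a x.
have := descent_lemma dF GL a (x - a); rewrite [a + _]addrC subrK.
have := strongly_convex_bregman dphi sc a x.
have : K / 2 * dotv (x - a) (x - a) <= th / 2 * dotv (x - a) (x - a).
  by apply: ler_wpM2r; [exact: dotvv_ge0 | lra].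
lra.
Qed.

Lemma is_gradientB {F1 G1 F2 G2} : is_gradient F1 G1 -> is_gradient F2 G2 ->
  is_gradient (fun x => F1 x - F2 x) (fun x => G1 x - G2 x).
Proof.
move=> dF1 dF2 x eps eps_gt0; have eps2_gt0 : 0 < eps / 2 by rewrite divr_gt0.
have [d1 [d1_gt0 Hd1]] := dF1 x _ eps2_gt0.
have [d2 [d2_gt0 Hd2]] := dF2 x _ eps2_gt0.
exists (Num.min d1 d2); split=> [|h]; first by rewrite lt_min d1_gt0 d2_gt0.
rewrite lt_min => /andP[/Hd1 h1 /Hd2 h2]; rewrite dotvBl.
rewrite (_ : _ - _ - _ = (F1 (x + h) - F1 x - dotv (G1 x) h)
                       - (F2 (x + h) - F2 x - dotv (G2 x) h)); last by ring.
by apply: le_trans (ler_normB _ _) _; lra.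
Qed.

Lemma is_gradient_linear_bregman {phi gphi} c a : is_gradient phi gphi ->
  is_gradient (fun x => - (dotv c x + bregman phi gphi x a))
              (fun x => - (c + gphi x - gphi a)).
Proof.
move=> dphi x eps /(dphi x)[d [d_gt0 Hd]]; exists d; split=> // h /Hd.
rewrite -normrN; congr (`|_| <= _).
by rewrite /bregman !(dotvDl, dotvDr, dotvNl, dotvBl, dotvBr); ring.
Qed.

Lemma lipschitz_vB {G1 G2} {c1 c2 : R} : lipschitz_v G1 c1 -> lipschitz_v G2 c2 ->
  lipschitz_v (fun x => G1 x - G2 x) (`|c1| + `|c2|).
Proof.
move=> L1 L2 x y.
have -> : G1 x - G2 x - (G1 y - G2 y) = (G1 x - G1 y) - (G2 x - G2 y).
  by apply/rowP => i; rewrite !mxE; ring.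
apply: le_trans (ler_normvB _ _) _; rewrite mulrDl.
have le_norm (c : R) t : 0 <= t -> c * t <= `|c| * t.
  by move=> t_ge0; rewrite ler_wpM2r // ler_norm.
by apply: lerD; [apply: le_trans (L1 x y) _ | apply: le_trans (L2 x y) _];
  apply: le_norm; exact: normv_ge0.
Qed.

End SmoothFunctions.

Section ProductSpace.
Context {R : realType} {n m : nat}.
Implicit Types (a : 'rV[R]_n) (b : 'rV[R]_m) (z w : 'rV[R]_n * 'rV[R]_m).

Lemma subpE z w : subp z w = z - w.
Proof. by []. Qed.

Lemma ler_normv_normp1 a b : normv a <= normp (a, b).
Proof. by rewrite ler_sqrt ?addr_ge0 ?dotvv_ge0 // lerDl dotvv_ge0. Qed.

Lemma ler_normv_normp2 a b : normv b <= normp (a, b).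
Proof. by rewrite ler_sqrt ?addr_ge0 ?dotvv_ge0 // lerDr dotvv_ge0. Qed.

Lemma ler_normp a b : normp (a, b) <= normv a + normv b.
Proof.
rewrite -[leRHS]ger0_norm ?addr_ge0 ?normv_ge0 // -sqrtr_sqr ler_sqrt ?sqr_ge0 //.
rewrite -/(dotp (a, b) (a, b)) /dotp /= -(normv_sqr a) -(normv_sqr b).
by have := normv_ge0 a; have := normv_ge0 b; nra.
Qed.

Lemma ler_normpD z w : normp (z + w) <= 2 * (normp z + normp w).
Proof.
case: z w => [a1 b1] [a2 b2]; apply: le_trans (ler_normp _ _) _.
have := ler_normvD a1 a2; have := ler_normvD b1 b2.
have := ler_normv_normp1 a1 b1; have := ler_normv_normp2 a1 b1.
have := ler_normv_normp1 a2 b2; have := ler_normv_normp2 a2 b2.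
lra.
Qed.

Lemma dotpDl z w (d : 'rV[R]_n * 'rV[R]_m) : dotp (z + w) d = dotp z d + dotp w d.
Proof. by rewrite /dotp !dotvDl addrACA. Qed.

Lemma seq_cvgpD (zs ws : nat -> 'rV[R]_n * 'rV[R]_m) z w :
  seq_cvg subp normp zs z -> seq_cvg subp normp ws w ->
  seq_cvg subp normp (fun k => zs k + ws k) (z + w).
Proof.
move=> zs_cvg ws_cvg eps eps_gt0; have eps4_gt0 : 0 < eps / 4 by rewrite divr_gt0.
have [N1 HN1] := zs_cvg _ eps4_gt0; have [N2 HN2] := ws_cvg _ eps4_gt0.
exists (maxn N1 N2) => k; rewrite geq_max => /andP[/HN1 k1 /HN2 k2].
rewrite !subpE opprD addrACA; apply: le_lt_trans (ler_normpD _ _) _.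
by rewrite -!subpE; lra.
Qed.

Lemma frechet_gradient_sum f gf g gg z : is_gradient f gf -> is_gradient g gg ->
  frechet_gradient subp normp dotp (fun w => f w.1 + g w.2) z (gf z.1, gg z.2).
Proof.
move=> df dg eps eps_gt0; have eps2_gt0 : 0 < eps / 2 by rewrite divr_gt0.
have [d1 [d1_gt0 Hd1]] := is_gradient_frechet z.1 df _ eps2_gt0.
have [d2 [d2_gt0 Hd2]] := is_gradient_frechet z.2 dg _ eps2_gt0.
exists (Num.min d1 d2); split=> [|w]; first by rewrite lt_min d1_gt0 d2_gt0.
have n1 := ler_normv_normp1 (w.1 - z.1) (w.2 - z.2).
have n2 := ler_normv_normp2 (w.1 - z.1) (w.2 - z.2).
rewrite lt_min /subp /dotp /= => /andP[w1 w2].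
move: (Hd1 _ (le_lt_trans n1 w1)) (Hd2 _ (le_lt_trans n2 w2)) => h1 h2.
rewrite (_ : _ - _ - _ = (f w.1 - f z.1 - dotv (gf z.1) (w.1 - z.1))
                       + (g w.2 - g z.2 - dotv (gg z.2) (w.2 - z.2))); last by ring.
by apply: le_trans (ler_normD _ _) _; nra.
Qed.

Lemma subdiffp_add_smooth {f gf g gg} {F1 F2 : 'rV[R]_n * 'rV[R]_m -> \bar R} {z v} :
  is_gradient f gf -> continuous_v gf -> is_gradient g gg -> continuous_v gg ->
  (forall w, F2 w = (F1 w + (f w.1 + g w.2)%:E)%E) ->
  subdiffp F1 z v -> subdiffp F2 z (v + (gf z.1, gg z.2)).
Proof.
move=> df gf_cont dg gg_cont F2E.
apply: (limiting_subdiffD dotpDl seq_cvgpD (G := fun w => (gf w.1, gg w.2)) F2E).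
- by move=> w; apply: frechet_gradient_sum.
- move=> eps eps_gt0; have eps2_gt0 : 0 < eps / 2 by rewrite divr_gt0.
  have [d1 [d1_gt0 Hd1]] := is_gradient_continuous z.1 df _ eps2_gt0.
  have [d2 [d2_gt0 Hd2]] := is_gradient_continuous z.2 dg _ eps2_gt0.
  exists (Num.min d1 d2); split=> [|w]; first by rewrite lt_min d1_gt0 d2_gt0.
  rewrite lt_min => /andP[w1 w2].
  have /Hd1 := le_lt_trans (ler_normv_normp1 _ _) w1.
  have /Hd2 := le_lt_trans (ler_normv_normp2 _ _) w2.
  rewrite (_ : f w.1 + g w.2 - _ = (f w.1 - f z.1) + (g w.2 - g z.2)); last by ring.
  by have := ler_normD (f w.1 - f z.1) (g w.2 - g z.2); lra.
- move=> eps eps_gt0; have eps2_gt0 : 0 < eps / 2 by rewrite divr_gt0.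
  have [d1 [d1_gt0 Hd1]] := gf_cont z.1 _ eps2_gt0.
  have [d2 [d2_gt0 Hd2]] := gg_cont z.2 _ eps2_gt0.
  exists (Num.min d1 d2); split=> [|w]; first by rewrite lt_min d1_gt0 d2_gt0.
  rewrite lt_min => /andP[w1 w2].
  have /Hd1 := le_lt_trans (ler_normv_normp1 _ _) w1.
  have /Hd2 := le_lt_trans (ler_normv_normp2 _ _) w2.
  by have := ler_normp (gf w.1 - gf z.1) (gg w.2 - gg z.2); lra.
Qed.

End ProductSpace.

Section Algorithm.
Context {R : realType} {n m : nat}.
Context {f : 'rV[R]_n -> R} {gf : 'rV[R]_n -> 'rV[R]_n}.
Context {g : 'rV[R]_m -> R} {gg : 'rV[R]_m -> 'rV[R]_m}.
Context {Q : 'rV[R]_n -> 'rV[R]_m -> \bar R} {q : 'rV[R]_n -> 'rV[R]_m -> R}.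
Context {gq : 'rV[R]_n -> 'rV[R]_m -> 'rV[R]_n} {h : 'rV[R]_n -> \bar R}.
Context {phi1 : 'rV[R]_n -> R} {gphi1 : 'rV[R]_n -> 'rV[R]_n}.
Context {phi2 : 'rV[R]_m -> R} {gphi2 : 'rV[R]_m -> 'rV[R]_m}.
Context {Lf Lg theta1 theta2 eta1 eta2 : R}.
Hypotheses (Hgf : is_gradient f gf) (Hgfc : continuous_v gf) (HgfL : lipschitz_v gf Lf).
Hypotheses (Hgg : is_gradient g gg) (Hggc : continuous_v gg) (HggL : lipschitz_v gg Lg).
Hypothesis HQprop : properQ Q.
Hypotheses (Hphi1 : is_gradient phi1 gphi1) (Hsc1 : strongly_convex phi1 theta1).
Hypotheses (Hth1 : Lf < theta1) (Hphi1L : lipschitz_v gphi1 eta1).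
Hypotheses (Hphi2 : is_gradient phi2 gphi2) (Hsc2 : strongly_convex phi2 theta2).
Hypotheses (Hth2 : Lg < theta2) (Hphi2L : lipschitz_v gphi2 eta2).
Hypothesis Hcoer : forall M : R, exists r : R, forall x y,
  r < normp (x, y) -> (M%:E < Lfun f g Q x y)%E.
Hypothesis Hpart : forall x y, in_domQ Q (x, y) -> forall vx vy,
  subdiffv (fun x' => Q x' y) x vx -> subdiffv (fun y' => Q x y') y vy ->
  subdiffp (fun z => Q z.1 z.2) (x, y) (vx, vy).
Hypothesis HQqh : forall x y, Q x y = ((q x y)%:E + h x)%E.
Hypothesis Hgq : forall y, is_gradient (fun x => q x y) (fun x => gq x y).
Hypothesis Hxi : forall (D1 : 'rV[R]_n -> Prop) (D2 : 'rV[R]_m -> Prop),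
  boundedv D1 -> boundedv D2 -> (forall x y, D1 x -> D2 y -> in_domQ Q (x, y)) ->
  exists xi : R, 0 < xi /\ forall xb y yb, D1 xb -> D2 y -> D2 yb ->
    normv (gq xb y - gq xb yb) <= xi * normv (y - yb).

Context {x xh : nat -> 'rV[R]_n} {y yh : nat -> 'rV[R]_m}.
Context {xm1 : 'rV[R]_n} {ym1 : 'rV[R]_m} {alpha beta : nat -> R}.
Hypothesis Hstepx : forall k, is_argmin (fun x' => (Q x' (yh k) +
  (dotv (gf (xh k)) x' + bregman phi1 gphi1 x' (xh k))%:E)%E) (x k.+1).
Hypothesis Hstepy : forall k, is_argmin (fun y' => (Q (x k.+1) y' +
  (dotv (gg (yh k)) y' + bregman phi2 gphi2 y' (yh k))%:E)%E) (y k.+1).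
Hypothesis Hstep3 : forall k,
  let u := extrap (alpha k) (beta k) (x k.+1) (x k) (prevs xm1 x k) in
  let v := extrap (alpha k) (beta k) (y k.+1) (y k) (prevs ym1 y k) in
  ((Lfun f g Q u v <= Lfun f g Q (x k.+1) (y k.+1))%E ->
    xh k.+1 = u /\ yh k.+1 = v) /\
  (~~ (Lfun f g Q u v <= Lfun f g Q (x k.+1) (y k.+1))%E ->
    xh k.+1 = x k.+1 /\ yh k.+1 = y k.+1).

Local Notation L := (Lfun f g Q).

Definition px k := gq (x k.+1) (y k.+1) - gq (x k.+1) (yh k) +
  (gf (x k.+1) - gf (xh k) - gphi1 (x k.+1) + gphi1 (xh k)).
Definition py k := gg (y k.+1) - gg (yh k) - gphi2 (y k.+1) + gphi2 (yh k).

Lemma Q_x_step_fin k : Q (x k.+1) (yh k) \is a fin_num.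
Proof. by case: (Hstepx k); rewrite fin_numD => /andP[]. Qed.

Lemma Q_y_step_fin k : Q (x k.+1) (y k.+1) \is a fin_num.
Proof. by case: (Hstepy k); rewrite fin_numD => /andP[]. Qed.

Lemma frechet_subdiff_x_step k :
  frechet_subdiff (fun u v => u - v) normv dotv (fun x' => Q x' (y k.+1)) (x k.+1)
    (px k - gf (x k.+1)).
Proof.
have Qyh : frechet_subdiff (fun u v => u - v) normv dotv (fun x' => Q x' (yh k)) (x k.+1)
    (0 + - (gf (xh k) + gphi1 (x k.+1) - gphi1 (xh k))).
  apply: (frechet_subdiffD dotvDl _ (is_gradient_frechet _
    (is_gradient_linear_bregman (gf (xh k)) (xh k) Hphi1)) (frechet_subdiffv_argmin (Hstepx k))).
  by move=> x'; rewrite EFinN addeK.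
have := frechet_subdiffD dotvDl _ (is_gradient_frechet _ (is_gradientB (Hgq (y k.+1)) (Hgq (yh k)))) Qyh.
rewrite (_ : _ + _ = px k - gf (x k.+1)); first apply.
  by move=> x'; rewrite !HQqh addeAC -EFinD subrKC.
by apply/rowP => i; rewrite /px !mxE; ring.
Qed.

Lemma frechet_subdiff_y_step k :
  frechet_subdiff (fun u v => u - v) normv dotv (fun y' => Q (x k.+1) y') (y k.+1)
    (py k - gg (y k.+1)).
Proof.
have := frechet_subdiffD dotvDl _ (is_gradient_frechet _
  (is_gradient_linear_bregman (gg (yh k)) (yh k) Hphi2)) (frechet_subdiffv_argmin (Hstepy k)).
rewrite (_ : _ + _ = py k - gg (y k.+1)); first apply.
  by move=> y'; rewrite EFinN addeK.
by apply/rowP => i; rewrite /py !mxE; ring.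
Qed.

Lemma subgradient_mem k : subdiffp (fun z => L z.1 z.2) (x k.+1, y k.+1) (px k, py k).
Proof.
have subdiffQ := Hpart _ _ (Q_y_step_fin k) _ _
  (frechet_subdiff_limiting normv_subvv (frechet_subdiff_x_step k))
  (frechet_subdiff_limiting normv_subvv (frechet_subdiff_y_step k)).
have := subdiffp_add_smooth Hgf Hgfc Hgg Hggc (fun z => addeC _ _) subdiffQ.
by rewrite (_ : _ + _ = (px k, py k)) //; apply: (congr2 pair); apply: subrK.
Qed.

Lemma Lfun_decrease k : (L (x k.+1) (y k.+1) <= L (xh k) (yh k))%E.
Proof.
have [_ /(_ (xh k))] := Hstepx k; have [_ /(_ (yh k))] := Hstepy k.
rewrite !bregmanvv !addr0.
have := linearization_le_bregman Hgf HgfL Hphi1 Hsc1 (ltW Hth1) (xh k) (x k.+1).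
have := linearization_le_bregman Hgg HggL Hphi2 Hsc2 (ltW Hth2) (yh k) (y k.+1).
rewrite /Lfun !dotvBr; have := HQprop.1 (xh k) (yh k).
case: (Q (xh k) (yh k)) => [Qh| |] // _; last by rewrite addey ?leey.
rewrite -(fineK (Q_x_step_fin k)) -(fineK (Q_y_step_fin k)) -!EFinD !lee_fin; lra.
Qed.

Lemma Lfun_extrapolation_le k : (L (xh k.+1) (yh k.+1) <= L (x k.+1) (y k.+1))%E.
Proof.
move: (Hstep3 k) => /=.
set u := extrap _ _ _ _ _; set v := extrap _ _ _ _ _ => -[accept reject].
case/boolP: (L u v <= L (x k.+1) (y k.+1))%E => [le_uv | /reject[-> ->] //].
by have [-> ->] := accept le_uv.
Qed.

Lemma Lfun_iterates_le k : (L (x k.+1) (y k.+1) <= L (x 1%N) (y 1%N))%E.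
Proof.
elim: k => [|k IHk] //.
exact: le_trans (Lfun_decrease k.+1) (le_trans (Lfun_extrapolation_le k) IHk).
Qed.

Lemma sublevel_bounded : exists r, forall u v,
  (L u v <= L (x 1%N) (y 1%N))%E -> normp (u, v) <= r.
Proof.
have L1_fin : L (x 1%N) (y 1%N) \is a fin_num by rewrite fin_numD Q_y_step_fin.
have [r Hr] := Hcoer (fine (L (x 1%N) (y 1%N))); exists r => u v le_uv.
rewrite leNgt; apply/negP => /Hr; rewrite fineK // => lt_uv.
by have := lt_le_trans lt_uv le_uv; rewrite ltxx.
Qed.

Lemma normp_subgradient_le k xi : 0 <= xi ->
  normv (gq (x k.+1) (y k.+1) - gq (x k.+1) (yh k)) <= xi * normv (y k.+1 - yh k) ->
  normp (px k, py k) <=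
    (xi + (`|Lf| + `|eta1|) + (`|Lg| + `|eta2|)) * normp (x k.+1 - xh k, y k.+1 - yh k).
Proof.
move=> xi_ge0 gq_lip.
set xk := x k.+1; set xhk := xh k; set yk := y k.+1; set yhk := yh k.
set N := normp (xk - xhk, yk - yhk).
have epx : px k = (gq xk yk - gq xk yhk) + ((gf xk - gphi1 xk) - (gf xhk - gphi1 xhk)).
  by apply/rowP => i; rewrite /px !mxE; ring.
have epy : py k = (gg yk - gphi2 yk) - (gg yhk - gphi2 yhk).
  by apply/rowP => i; rewrite /py !mxE; ring.
rewrite epx epy; apply: le_trans (ler_normp _ _) _.
have := ler_normvD (gq xk yk - gq xk yhk) ((gf xk - gphi1 xk) - (gf xhk - gphi1 xhk)).
have := lipschitz_vB HgfL Hphi1L xk xhk; have := lipschitz_vB HggL Hphi2L yk yhk.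
have c1_ge0 : 0 <= `|Lf| + `|eta1| by rewrite addr_ge0.
have c2_ge0 : 0 <= `|Lg| + `|eta2| by rewrite addr_ge0.
have := ler_wpM2l xi_ge0 (ler_normv_normp2 (xk - xhk) (yk - yhk)).
have := ler_wpM2l c1_ge0 (ler_normv_normp1 (xk - xhk) (yk - yhk)).
have := ler_wpM2l c2_ge0 (ler_normv_normp2 (xk - xhk) (yk - yhk)).
rewrite -/N; lra.
Qed.

Lemma subgradient_bound : exists rho, 0 < rho /\ forall k, (1 <= k)%N ->
  normp (px k, py k) <= rho * normp (x k.+1 - xh k, y k.+1 - yh k).
Proof.
have [r Hr] := sublevel_bounded.
pose D1 (u : 'rV[R]_n) := h u \is a fin_num /\ normv u <= r.
pose D2 (v : 'rV[R]_m) : Prop := normv v <= r.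
have D12_dom u v : D1 u -> D2 v -> in_domQ Q (u, v).
  by move=> [hu _] _; rewrite /in_domQ /= HQqh fin_numD hu.
have bD1 : boundedv D1 by exists r => u [].
have bD2 : boundedv D2 by exists r.
have [xi [xi_gt0 gq_lip]] := Hxi _ _ bD1 bD2 D12_dom.
exists (xi + (`|Lf| + `|eta1|) + (`|Lg| + `|eta2|)); split=> [|k k_ge1].
  by rewrite ltr_wpDr ?addr_ge0 // ltr_wpDr ?addr_ge0.
apply: normp_subgradient_le; first exact: ltW.
(* [yh_0] is arbitrary and need not lie in the sublevel set, hence [k >= 1]. *)
have [k' ->] : exists k', k = k'.+1 by exists k.-1; rewrite prednK.
have Lxk := Lfun_iterates_le k'.+1.
have Lxhk := le_trans (Lfun_extrapolation_le k') (Lfun_iterates_le k').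
apply: gq_lip; last exact: le_trans (ler_normv_normp2 _ _) (Hr _ _ Lxhk).
- split; last exact: le_trans (ler_normv_normp1 _ _) (Hr _ _ Lxk).
  by move: (Q_x_step_fin k'.+1); rewrite HQqh fin_numD => /andP[].
- exact: le_trans (ler_normv_normp2 _ _) (Hr _ _ Lxk).
Qed.

End Algorithm.

Theorem lemma3p2 (R : realType) (n m : nat)
  (f : 'rV[R]_n -> R) (gf : 'rV[R]_n -> 'rV[R]_n)
  (g : 'rV[R]_m -> R) (gg : 'rV[R]_m -> 'rV[R]_m)
  (Q : 'rV[R]_n -> 'rV[R]_m -> \bar R)
  (q : 'rV[R]_n -> 'rV[R]_m -> R) (gq : 'rV[R]_n -> 'rV[R]_m -> 'rV[R]_n)
  (h : 'rV[R]_n -> \bar R)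
  (phi1 : 'rV[R]_n -> R) (gphi1 : 'rV[R]_n -> 'rV[R]_n)
  (phi2 : 'rV[R]_m -> R) (gphi2 : 'rV[R]_m -> 'rV[R]_m)
  (Lf Lg theta1 theta2 eta1 eta2 : R)
  (* (A1) *)
  (HLbd : exists c : R, forall x y, (c%:E <= Lfun f g Q x y)%E)
  (Hgf : is_gradient f gf) (Hgfc : continuous_v gf) (HgfL : lipschitz_v gf Lf)
  (Hgg : is_gradient g gg) (Hggc : continuous_v gg) (HggL : lipschitz_v gg Lg)
  (HQprop : properQ Q) (HQlsc : lscQ Q)
  (Hphi1 : is_gradient phi1 gphi1) (Hsc1 : strongly_convex phi1 theta1)
  (Hth1 : Lf < theta1) (Hphi1L : lipschitz_v gphi1 eta1)
  (Hphi2 : is_gradient phi2 gphi2) (Hsc2 : strongly_convex phi2 theta2)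
  (Hth2 : Lg < theta2) (Hphi2L : lipschitz_v gphi2 eta2)
  (* (A2) *)
  (Hcoer : forall M : R, exists r : R, forall x y,
      r < normp (x, y) -> (M%:E < Lfun f g Q x y)%E)
  (HdomQ : closedp (in_domQ Q))
  (Hpart : forall x y, in_domQ Q (x, y) -> forall vx vy,
      subdiffv (fun x' => Q x' y) x vx -> subdiffv (fun y' => Q x y') y vy ->
      subdiffp (fun z => Q z.1 z.2) (x, y) (vx, vy))
  (HQqh : forall x y, Q x y = ((q x y)%:E + h x)%E)
  (Hh : forall x, h x \is a fin_num -> forall eps : R, 0 < eps ->
      exists delta : R, 0 < delta /\ forall x', h x' \is a fin_num ->
        normv (x' - x) < delta -> `|fine (h x') - fine (h x)| < eps)
  (Hq : forall z, in_domQ Q z -> forall eps : R, 0 < eps ->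
      exists delta : R, 0 < delta /\ forall w, in_domQ Q w ->
        normp (subp w z) < delta -> `|q w.1 w.2 - q z.1 z.2| < eps)
  (Hgq : forall y, is_gradient (fun x => q x y) (fun x => gq x y))
  (Hgqc : forall y, continuous_v (fun x => gq x y))
  (Hxi : forall (D1 : 'rV[R]_n -> Prop) (D2 : 'rV[R]_m -> Prop),
      boundedv D1 -> boundedv D2 ->
      (forall x y, D1 x -> D2 y -> in_domQ Q (x, y)) ->
      exists xi : R, 0 < xi /\ forall xb y yb, D1 xb -> D2 y -> D2 yb ->
        normv (gq xb y - gq xb yb) <= xi * normv (y - yb))
  (* the algorithm *)
  (x xh : nat -> 'rV[R]_n) (y yh : nat -> 'rV[R]_m)
  (xm1 : 'rV[R]_n) (ym1 : 'rV[R]_m)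
  (alpha beta : nat -> R) (amax bmax : R)
  (Hinit : xh 0%N = x 0%N /\ yh 0%N = y 0%N)
  (Hamax : 0 <= amax) (Hbmax : 0 <= bmax) (Hab : amax + bmax < 1)
  (Halpha : forall k, 0 <= alpha k <= amax)
  (Hbeta : forall k, 0 <= beta k <= bmax)
  (Hstepx : forall k, is_argmin (fun x' => (Q x' (yh k) +
      (dotv (gf (xh k)) x' + bregman phi1 gphi1 x' (xh k))%:E)%E) (x k.+1))
  (Hstepy : forall k, is_argmin (fun y' => (Q (x k.+1) y' +
      (dotv (gg (yh k)) y' + bregman phi2 gphi2 y' (yh k))%:E)%E) (y k.+1))
  (Hstep3 : forall k,
      let u := extrap (alpha k) (beta k) (x k.+1) (x k) (prevs xm1 x k) in
      let v := extrap (alpha k) (beta k) (y k.+1) (y k) (prevs ym1 y k) in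
      ((Lfun f g Q u v <= Lfun f g Q (x k.+1) (y k.+1))%E ->
          xh k.+1 = u /\ yh k.+1 = v) /\
      (~~ (Lfun f g Q u v <= Lfun f g Q (x k.+1) (y k.+1))%E ->
          xh k.+1 = x k.+1 /\ yh k.+1 = y k.+1)) :
  let px := fun k => gq (x k.+1) (y k.+1) - gq (x k.+1) (yh k) +
      (gf (x k.+1) - gf (xh k) - gphi1 (x k.+1) + gphi1 (xh k)) in
  let py := fun k => gg (y k.+1) - gg (yh k) - gphi2 (y k.+1) + gphi2 (yh k) in
  (forall k, (1 <= k)%N ->
     subdiffp (fun z => Lfun f g Q z.1 z.2) (x k.+1, y k.+1) (px k, py k)) /\
  exists rho : R, 0 < rho /\ forall k, (1 <= k)%N ->
     normp (px k, py k) <= rho * normp (x k.+1 - xh k, y k.+1 - yh k).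
Proof.
move=> px py; split=> [k _|].
- exact: (subgradient_mem Hgf Hgfc Hgg Hggc Hphi1 Hphi2 Hpart HQqh Hgq Hstepx Hstepy).
- exact: (subgradient_bound Hgf HgfL Hgg HggL HQprop Hphi1 Hsc1 Hth1 Hphi1L
    Hphi2 Hsc2 Hth2 Hphi2L Hcoer HQqh Hxi Hstepx Hstepy Hstep3).
Qed.
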